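(* Let $\Gamma\subseteq\mathbb R^n$ be an open convex set, $S\subseteq\Gamma$ a nonempty convex set, and $f:\Gamma\to\mathbb R$ a continuously differentiable function that is pseudoconvex on $\Gamma$. Let $\bar S=\arg\min\{f(x)\mid x\in S\}$ and $\bar x\in\bar S$. Define \[ \begin{aligned} T_1&:=\{x\in S\mid \nabla f(x)^T(\bar x-x)=0\},\\ T_2&:=\{x\in S\mid \nabla f(x)^T(\bar x-x)\ge0\},\\ T_3&:=\{x\in S\mid \nabla f(x)^T(\bar x-x)=\nabla f(\bar x)^T(x-\bar x)\},\\ T_4&:=\{x\in S\mid \nabla f(x)^T(\bar x-x)\ge\nabla f(\bar x)^T(x-\bar x)\},\\ T_5&:=\{x\in S\mid \nabla f(x)^T(\bar x-x)=\nabla f(\bar x)^T(x-\bar x)=0\}. \end{aligned} \] Then $\bar S=T_1=T_2=T_3=T_4=T_5$.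
   Context: A differentiable function $f$ on an open set $\Gamma$ is pseudoconvex on $\Gamma$ iff for all $x,y\in\Gamma$, $f(y)<f(x)$ implies $\nabla f(x)^T(y-x)<0$. *)

From Stdlib Require Import Reals.
From mathcomp Require Import ssreflect ssrfun ssrbool eqtype ssrnat seq fintype bigop.

Set Implicit Arguments.
Unset Strict Implicit.

Local Open Scope R_scope.

Definition vec (n : nat) : Type := 'I_n -> R.

Definition vadd {n} (x y : vec n) : vec n := fun i => x i + y i.
Definition vsub {n} (x y : vec n) : vec n := fun i => x i - y i.
Definition vscale {n} (t : R) (x : vec n) : vec n := fun i => t * x i.

Definition dot {n} (x y : vec n) : R := \big[Rplus/0]_(i < n) (x i * y i).
Definition vnorm {n} (x : vec n) : R := sqrt (dot x x).

Definition is_open_vec {n} (G : vec n -> Prop) : Prop :=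
  forall x, G x -> exists eps, 0 < eps /\
    forall y, vnorm (vsub y x) < eps -> G y.

Definition is_convex_vec {n} (C : vec n -> Prop) : Prop :=
  forall x y t, C x -> C y -> 0 <= t <= 1 ->
    C (vadd (vscale t x) (vscale (1 - t) y)).

Definition has_gradient {n} (f : vec n -> R) (x g : vec n) : Prop :=
  forall eps, 0 < eps -> exists delta, 0 < delta /\
    forall h, vnorm h < delta ->
      Rabs (f (vadd x h) - f x - dot g h) <= eps * vnorm h.

Definition C1_on {n} (G : vec n -> Prop) (f : vec n -> R) (grad : vec n -> vec n)
  : Prop :=
  (forall x, G x -> has_gradient f x (grad x)) /\
  (forall x, G x -> forall eps, 0 < eps -> exists delta, 0 < delta /\
     forall y, G y -> vnorm (vsub y x) < delta ->
       vnorm (vsub (grad y) (grad x)) < eps).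

Definition pseudoconvex_on {n} (G : vec n -> Prop) (f : vec n -> R)
  (grad : vec n -> vec n) : Prop :=
  forall x y, G x -> G y -> f y < f x -> dot (grad x) (vsub y x) < 0.

Definition argmin_on {n} (f : vec n -> R) (S : vec n -> Prop) (x : vec n) : Prop :=
  S x /\ forall y, S y -> f x <= f y.

(* A minimiser xbar satisfies the first-order condition grad f(xbar)^T (x - xbar) >= 0
   on S.  Conversely, if grad f(x)^T (xbar - x) >= 0 then f x <= f xbar by
   pseudoconvexity, so x is a minimiser.  Finally, f is constant on the segment
   between two minimisers u and v: at a point w of the segment with f w > f u,
   pseudoconvexity would make both grad f(w)^T (u - w) and grad f(w)^T (v - w)
   negative, although these directions point opposite ways.  Hence both
   directional derivatives along [u, v] vanish, which gives all five
   characterisations at once. *)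
From Stdlib Require Import Reals Lra Psatz FunctionalExtensionality.
From mathcomp Require bigop.
Local Open Scope R_scope.

Lemma dot_scaler n (x y : vec n) t : dot x (vscale t y) = t * dot x y.
Proof.
  unfold dot, vscale.
  apply (bigop.big_ind2 (fun a b => b = t * a)); intros; subst; ring.
Qed.

Lemma dot_scalel n (x y : vec n) t : dot (vscale t x) y = t * dot x y.
Proof.
  unfold dot, vscale.
  apply (bigop.big_ind2 (fun a b => b = t * a)); intros; subst; ring.
Qed.

Lemma vnorm_ge0 n (x : vec n) : 0 <= vnorm x.
Proof. apply sqrt_pos. Qed.

Lemma vnorm_scale n (x : vec n) t : vnorm (vscale t x) = Rabs t * vnorm x.
Proof.
  unfold vnorm. rewrite dot_scalel, dot_scaler, <- Rmult_assoc.
  rewrite sqrt_mult_alt by apply Rle_0_sqr.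
  now rewrite <- (sqrt_Rsqr_abs t).
Qed.

Definition seg {n} (x y : vec n) (t : R) : vec n := vadd x (vscale t (vsub y x)).

Lemma convex_seg n (C : vec n -> Prop) x y t :
  is_convex_vec C -> C x -> C y -> 0 <= t <= 1 -> C (seg x y t).
Proof.
  intros HC Hx Hy Ht.
  replace (seg x y t) with (vadd (vscale t y) (vscale (1 - t) x)).
  - apply HC; auto; lra.
  - apply functional_extensionality; intro i; unfold seg, vadd, vscale, vsub; ring.
Qed.

Lemma vsub_seg_l n (x y : vec n) t : vsub x (seg x y t) = vscale (- t) (vsub y x).
Proof.
  apply functional_extensionality; intro i; unfold seg, vadd, vscale, vsub; ring.
Qed.

Lemma vsub_seg_r n (x y : vec n) t :
  vsub y (seg x y t) = vscale (1 - t) (vsub y x).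
Proof.
  apply functional_extensionality; intro i; unfold seg, vadd, vscale, vsub; ring.
Qed.

Lemma has_gradient_seg n (f : vec n -> R) x g y eps :
  has_gradient f x g -> 0 < eps ->
  exists t, 0 < t < 1 /\
    Rabs (f (seg x y t) - f x - t * dot g (vsub y x)) <= eps * t.
Proof.
  intros Hg Heps.
  set (N := vnorm (vsub y x)).
  assert (HN : 0 <= N) by apply vnorm_ge0.
  destruct (Hg (eps / (N + 1))) as [d [Hd Hh]].
  { apply Rdiv_lt_0_compat; lra. }
  set (t := Rmin (1/2) (d / (N + 1))).
  assert (Ht1 : t <= 1/2) by apply Rmin_l.
  assert (Htd : t <= d / (N + 1)) by apply Rmin_r.
  assert (Ht0 : 0 < t).
  { apply Rmin_glb_lt; [lra | apply Rdiv_lt_0_compat; lra]. }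
  assert (Hnorm : vnorm (vscale t (vsub y x)) = t * N).
  { rewrite vnorm_scale, Rabs_right by lra. reflexivity. }
  exists t; split; [lra|].
  specialize (Hh (vscale t (vsub y x))).
  rewrite Hnorm, dot_scaler in Hh; fold (seg x y t) in Hh.
  assert (Hinv : / (N + 1) * (N + 1) = 1) by (field; lra).
  assert (Hinv0 : 0 < / (N + 1)) by (apply Rinv_0_lt_compat; lra).
  assert (Hdt : t * (N + 1) <= d).
  { assert (H := Rmult_le_compat_r (N + 1) _ _ ltac:(lra) Htd).
    unfold Rdiv in H. nra. }
  eapply Rle_trans; [apply Hh; lra|].
  assert (HN1 : / (N + 1) * N = 1 - / (N + 1)) by (field; lra).
  assert (Heps_t : 0 < eps * t) by nra.
  unfold Rdiv. nra.
Qed.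

Lemma has_gradient_seg_sign n (f : vec n -> R) x g y :
  has_gradient f x g -> dot g (vsub y x) <> 0 ->
  exists t, 0 < t < 1 /\ 0 < (f (seg x y t) - f x) * dot g (vsub y x).
Proof.
  intros Hg Ha.
  set (a := dot g (vsub y x)) in *.
  assert (Hpa : 0 < Rabs a) by (apply Rabs_pos_lt; auto).
  destruct (has_gradient_seg _ _ _ _ y (Rabs a / 2) Hg) as [t [Ht Hle]]; [lra|].
  fold a in Hle. exists t; split; [exact Ht|].
  set (D := f (seg x y t) - f x) in *.
  assert (Hup := Rle_abs (D - t * a)).
  assert (Hlo := Rle_abs (- (D - t * a))); rewrite Rabs_Ropp in Hlo.
  destruct (Rlt_or_le a 0) as [Hneg | Hpos].
  - rewrite (Rabs_left a) in Hle by lra.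
    assert (Hta : t * a < 0) by nra.
    assert (HD : D < 0) by lra. nra.
  - rewrite (Rabs_right a) in Hle by lra.
    assert (Hta : 0 < t * a) by nra.
    assert (HD : 0 < D) by lra. nra.
Qed.

Lemma seg_min_grad_ge0 n (f : vec n -> R) x g y :
  has_gradient f x g -> (forall t, 0 < t < 1 -> f x <= f (seg x y t)) ->
  0 <= dot g (vsub y x).
Proof.
  intros Hg Hmin.
  destruct (Rle_or_lt 0 (dot g (vsub y x))) as [H | H]; [exact H|].
  destruct (has_gradient_seg_sign _ _ _ _ y Hg (Rlt_not_eq _ _ H)) as [t [Ht Hpos]].
  specialize (Hmin t Ht). nra.
Qed.

Lemma seg_const_grad_eq0 n (f : vec n -> R) x g y :
  has_gradient f x g -> (forall t, 0 < t < 1 -> f (seg x y t) = f x) ->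
  dot g (vsub y x) = 0.
Proof.
  intros Hg Hconst.
  destruct (Req_dec (dot g (vsub y x)) 0) as [H | H]; [exact H|].
  destruct (has_gradient_seg_sign _ _ _ _ y Hg H) as [t [Ht Hpos]].
  rewrite Hconst in Hpos by exact Ht. lra.
Qed.

Section PseudoconvexArgmin.

Variables (n : nat) (G S : vec n -> Prop) (f : vec n -> R) (grad : vec n -> vec n).
Hypothesis SG : forall x, S x -> G x.
Hypothesis convexS : is_convex_vec S.
Hypothesis gradf : forall x, G x -> has_gradient f x (grad x).
Hypothesis pcvxf : pseudoconvex_on G f grad.

Lemma argmin_grad_ge0 x y : argmin_on f S x -> S y -> 0 <= dot (grad x) (vsub y x).
Proof.
  intros [Sx minx] Sy.
  apply seg_min_grad_ge0 with f; [apply gradf, SG, Sx|].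
  intros t Ht. apply minx, convex_seg; auto; lra.
Qed.

Lemma argmin_of_grad_ge0 x xbar :
  argmin_on f S xbar -> S x -> 0 <= dot (grad x) (vsub xbar x) -> argmin_on f S x.
Proof.
  intros [Sxbar minxbar] Sx Hgrad. split; [exact Sx|].
  intros y Sy.
  destruct (Rle_or_lt (f x) (f xbar)) as [Hle | Hlt].
  - specialize (minxbar y Sy). lra.
  - specialize (pcvxf _ _ (SG _ Sx) (SG _ Sxbar) Hlt). lra.
Qed.

Lemma argmin_seg_const u v t :
  argmin_on f S u -> argmin_on f S v -> 0 < t < 1 -> f (seg u v t) = f u.
Proof.
  intros [Su minu] [Sv minv] Ht.
  assert (Sw : S (seg u v t)) by (apply convex_seg; auto; lra).
  destruct (Rle_lt_or_eq_dec _ _ (minu _ Sw)) as [Hlt | Heq]; [exfalso | auto].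
  assert (Hvu : f v = f u) by (specialize (minu v Sv); specialize (minv u Su); lra).
  assert (Hu := pcvxf _ _ (SG _ Sw) (SG _ Su) Hlt).
  assert (Hv : dot (grad (seg u v t)) (vsub v (seg u v t)) < 0)
    by (apply pcvxf; auto; lra).
  rewrite vsub_seg_l, dot_scaler in Hu.
  rewrite vsub_seg_r, dot_scaler in Hv.
  nra.
Qed.

Lemma argmin_grad_eq0 u v :
  argmin_on f S u -> argmin_on f S v -> dot (grad u) (vsub v u) = 0.
Proof.
  intros Hu Hv.
  apply seg_const_grad_eq0 with f; [apply gradf, SG, Hu|].
  intros t Ht. now apply argmin_seg_const.
Qed.

End PseudoconvexArgmin.

Theorem corollary3 (n : nat) (G S : vec n -> Prop) (f : vec n -> R)
  (grad : vec n -> vec n) (xbar : vec n) :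
  is_open_vec G -> is_convex_vec G ->
  (forall x, S x -> G x) -> (exists x, S x) -> is_convex_vec S ->
  C1_on G f grad -> pseudoconvex_on G f grad ->
  argmin_on f S xbar ->
  forall x,
    (argmin_on f S x <-> (S x /\ dot (grad x) (vsub xbar x) = 0)) /\
    (argmin_on f S x <-> (S x /\ dot (grad x) (vsub xbar x) >= 0)) /\
    (argmin_on f S x <->
       (S x /\ dot (grad x) (vsub xbar x) = dot (grad xbar) (vsub x xbar))) /\
    (argmin_on f S x <->
       (S x /\ dot (grad x) (vsub xbar x) >= dot (grad xbar) (vsub x xbar))) /\
    (argmin_on f S x <->
       (S x /\ dot (grad x) (vsub xbar x) = dot (grad xbar) (vsub x xbar) /\
               dot (grad xbar) (vsub x xbar) = 0)).
Proof.
  intros _ _ SG _ convexS [gradf _] pcvxf minxbar x.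
  assert (Hnec : argmin_on f S x -> S x /\
    dot (grad x) (vsub xbar x) = 0 /\ dot (grad xbar) (vsub x xbar) = 0).
  { intros minx. split; [apply minx | split; eapply argmin_grad_eq0; eauto]. }
  assert (Hsuf : S x -> 0 <= dot (grad x) (vsub xbar x) -> argmin_on f S x)
    by (intros; eapply argmin_of_grad_ge0; eauto).
  assert (Hfo : S x -> 0 <= dot (grad xbar) (vsub x xbar))
    by (intros; eapply argmin_grad_ge0; eauto).
  split; [|split; [|split; [|split]]]; split; intro Hequiv; first
    [ destruct (Hnec Hequiv) as (Sx & Hgrad_x & Hgrad_xbar); split; [exact Sx | try split; lra]
    | destruct Hequiv as [Sx Hgrad]; pose proof (Hfo Sx); apply (Hsuf Sx); lra ].
Qed.
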